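(* Let $d\ge1$, $0<s_0<s_1$, $0<\alpha_0<\alpha_1$, $W=[s_0,s_1]\times[\alpha_0,\alpha_1]$ with interior $W^\circ$, let $g\in L^2_0(\mathbb{T}^d;\mathbb{C})$ and $u_d\in L^2(\mathbb{T}^d;\mathbb{C})$ with Fourier coefficient sequences $\widehat{\mathbf G}=(\hat g_k)_k$, $\widehat{\mathbf U}_d=(\hat u_{d,k})_k$. Let $\varphi\in C^2(W^\circ,\mathbb{R})$ be non-negative and convex with $\varphi(s,\alpha)\to\infty$ whenever $s\to s_0$, $s\to s_1$, $\alpha\to\alpha_0$ or $\alpha\to\alpha_1$. Define $\mathcal{S}(s,\alpha)=\big(\frac{\alpha}{\alpha+|k|^{2s}}\hat g_k\big)_{k\in\mathbb{Z}^d}$ and $$j(s,\alpha)=\frac{1}{2(2\pi)^d}\|\mathcal{S}(s,\alpha)-\widehat{\mathbf U}_d\|_{\ell^2}^2+\varphi(s,\alpha),\quad (s,\alpha)\in W^\circ.$$ Then there exists $(\bar s,\bar\alpha)\in W^\circ$ with $j(\bar s,\bar\alpha)\le j(s,\alpha)$ for all $(s,\alpha)\in W^\circ$ (i.e. an optimal triple $(\bar s,\bar\alpha,\mathcal{S}(\bar s,\bar\alpha))$ exists), and the function with Fourier coefficients $\mathcal{S}(\bar s,\bar\alpha)$ lies in $H^{2\bar s}_0(\mathbb{T}^d;\mathbb{C})$.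
   Context: $\mathbb{T}^d=\mathbb{R}^d/(2\pi\mathbb{Z})^d$; $\hat u_k=\int_{\mathbb{T}^d}u\,e^{-ik\cdot x}dx$; convention $|0|^{2s}=0$. $L^2_0$ is the zero-mean subspace of $L^2$. For $\sigma\ge0$, $H^\sigma_0(\mathbb{T}^d;\mathbb{C})=\{u\in L^2_0:\sum_{k\ne0}|k|^{2\sigma}|\hat u_k|^2<\infty\}$. $\mathcal{S}(s,\alpha)$ is the Fourier coefficient sequence of the solution $u$ of $(-\Delta)^su+\alpha u=\alpha g$, where $(-\Delta)^s u=(2\pi)^{-d}\sum_k|k|^{2s}\hat u_k e^{ik\cdot x}$. *)

From HB Require Import structures.
From mathcomp Require Import all_boot all_order all_algebra.
From mathcomp Require Export complex.
From mathcomp Require Import all_classical all_reals all_analysis.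
Set Implicit Arguments. Unset Strict Implicit. Unset Printing Implicit Defensive.
Import Order.TTheory GRing.Theory Num.Theory.
Import numFieldNormedType.Exports.
Local Open Scope classical_set_scope.
Local Open Scope ring_scope.

Section Defs.
Variable R : realType.

Definition freq (d : nat) := 'rV[int]_d.

Definition knorm2 (d : nat) (k : freq d) : R := \sum_(i < d) ((k ord0 i)%:~R) ^+ 2.

(* |k|^(2 s) with the convention |0|^(2s) = 0 *)
Definition kpow (d : nat) (k : freq d) (s : R) : R :=
  if k == 0 then 0 else powR (knorm2 k) s.

Definition sqmod (z : R[i]) : R := (complex.Re z) ^+ 2 + (complex.Im z) ^+ 2.

Definition l2norm2 (d : nat) (c : freq d -> R[i]) : \bar R :=
  (\esum_(k in [set: freq d]) (sqmod (c k))%:E)%E.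

(* c is the Fourier coefficient sequence of an L^2 function (Parseval) *)
Definition is_L2 (d : nat) (c : freq d -> R[i]) : Prop := (l2norm2 c < +oo)%E.

(* ... of an L^2_0 (zero-mean) function *)
Definition is_L2_0 (d : nat) (c : freq d -> R[i]) : Prop := is_L2 c /\ c 0 = 0.

(* ... of a function in H^sigma_0(T^d; C) *)
Definition is_H0 (d : nat) (sigma : R) (c : freq d -> R[i]) : Prop :=
  is_L2_0 c /\
  (\esum_(k in [set: freq d]) (kpow k sigma * sqmod (c k))%:E < +oo)%E.

Definition Ssol (d : nat) (g : freq d -> R[i]) (s alpha : R) : freq d -> R[i] :=
  fun k => ((alpha / (alpha + kpow k s))%:C * g k)%C.

Definition Wint (s0 s1 a0 a1 : R) : set (R * R) :=
  [set x | s0 < x.1 < s1 /\ a0 < x.2 < a1].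

Definition e1 : R * R := (1, 0).
Definition e2 : R * R := (0, 1).

(* C^2 on an open set U of R^2: all partial derivatives of order <= 2
   exist on U and those of order 2 are continuous on U (hence f is C^2). *)
Definition C2_on (U : set (R * R)) (f : R * R -> R) : Prop :=
  forall v w, v \in [:: e1; e2] -> w \in [:: e1; e2] ->
    (forall x, U x -> derivable f x v) /\
    (forall x, U x -> derivable ('D_v f) x w) /\
    (forall x, U x -> {for x, continuous ('D_w ('D_v f))}).

Definition convex_on (U : set (R * R)) (f : R * R -> R) : Prop :=
  forall x y (t : R), U x -> U y -> 0 <= t <= 1 ->
    f (t *: x + (1 - t) *: y) <= t * f x + (1 - t) * f y.

Definition blowup_at_boundary (s0 s1 a0 a1 : R) (f : R * R -> R) : Prop :=
  forall M : R, exists2 delta : R, 0 < delta &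
    forall x, Wint s0 s1 a0 a1 x ->
      (x.1 < s0 + delta \/ s1 - delta < x.1 \/ x.2 < a0 + delta \/ a1 - delta < x.2) ->
      M <= f x.

Definition jfun (d : nat) (g ud : freq d -> R[i]) (phi : R * R -> R) (x : R * R)
  : \bar R :=
  ((2 * (2 * pi) ^+ d)^-1%:E * l2norm2 (fun k => (Ssol g x.1 x.2 k - ud k)%R)
   + (phi x)%:E)%E.

End Defs.

From HB Require Import structures.
From mathcomp Require Import all_boot all_order all_algebra.
From mathcomp Require Import complex.
From mathcomp Require Import all_classical all_reals all_analysis.
From mathcomp Require Import ring lra.
Import Order.TTheory GRing.Theory Num.Theory.
Import numFieldNormedType.Exports.
Local Open Scope classical_set_scope.
Local Open Scope ring_scope.
Set Implicit Arguments. Unset Strict Implicit. Unset Printing Implicit Defensive.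

(* The misfit term is a supremum of finite sums of functions that are
   continuous in (s, alpha), hence lower semicontinuous; a convex function is
   bounded above on small squares by its values at the corners, hence lower
   semicontinuous in the interior as well.  So j is lower semicontinuous on W°.
   Since phi <= j blows up at the boundary, outside a compact rectangle j is
   larger than its value at the centre of W, and on that rectangle a lower
   semicontinuous function attains its minimum.  The regularity of the optimal
   state comes from |k|^(2s) * alpha / (alpha + |k|^(2s)) <= alpha. *)

Section LowerSemicontinuity.
Context {T : topologicalType}.

Definition lsc_at {d} {V : porderType d} (f : T -> V) (x : T) :=
  forall a, (a < f x)%O -> \forall y \near x, (a < f y)%O.

Lemma compact_lsc_min {d} {V : orderType d} (f : T -> V) (K : set T) :
  compact K -> K !=set0 -> (forall x, K x -> lsc_at f x) ->
  exists2 x, K x & forall y, K y -> (f x <= f y)%O.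
Proof.
move=> cK [x0 Kx0] flsc.
(* a cluster point of the filter of sublevel sets is a minimiser *)
pose below y := [set x | K x /\ (f x <= f y)%O].
pose F := filter_from K below.
have FF : ProperFilter F.
  apply: filter_from_proper; last by move=> y Ky; exists y.
  apply: filter_from_filter; first by exists x0.
  move=> y z Ky Kz; exists (if (f y <= f z)%O then y else z); first by case: ifP.
  move=> x [Kx]; case: ifP => [fyz fxy|/negbT].
    by split; split=> //; exact: le_trans fyz.
  by rewrite -ltNge => /ltW fzy fxz; split; split=> //; exact: le_trans fzy.
have FK : F K by exists x0 => // x [].
have [xbar [Kxbar clxbar]] := cK F FF FK.
exists xbar => // y Ky; rewrite leNgt; apply/negP => fy_lt.
have Fy : F (below y) by exists y.
have [z [[_ fzy] fyz]] := clxbar _ _ Fy (flsc _ Kxbar _ fy_lt).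
by move: fyz; rewrite ltNge fzy.
Qed.

End LowerSemicontinuity.

Section RealLowerSemicontinuity.
Context {R : realType} {T : topologicalType}.
Implicit Types (f g : T -> R) (x : T).

Lemma continuous_lsc_at f x : {for x, continuous f} -> lsc_at f x.
Proof. exact: cvgr_gt. Qed.

Lemma lsc_atD f g x : lsc_at f x -> lsc_at g x -> lsc_at (f \+ g) x.
Proof.
move=> flsc glsc a ltafg; pose e := (f x + g x - a) / 2.
have lt_f : f x - e < f x by rewrite ltrBlDr ltrDl divr_gt0 // subr_gt0.
have lt_g : g x - e < g x by rewrite ltrBlDr ltrDl divr_gt0 // subr_gt0.
have a_eq : (f x - e) + (g x - e) = a by rewrite /e; field.
have Hf := flsc _ lt_f; have Hg := glsc _ lt_g.
near=> y; rewrite /= -a_eq; apply: ltrD; near: y; [exact: Hf | exact: Hg].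
Unshelve. all: by end_near.
Qed.

Lemma lsc_atZl (c : R) f x : 0 < c -> lsc_at f x -> lsc_at (fun y => c * f y) x.
Proof.
move=> c_gt0 flsc a; rewrite -ltr_pdivrMl // => /flsc.
by apply: filterS => y; rewrite ltr_pdivrMl.
Qed.

End RealLowerSemicontinuity.

Section FineEsumLsc.
Context {R : realType} {T : topologicalType} {I : choiceType}.
Variables (F : I -> T -> R) (x : T).
Hypothesis F_ge0 : forall i y, 0 <= F i y.
Hypothesis F_cont : forall i, {for x, continuous (F i)}.

Local Notation esumF y := (\esum_(i in [set: I]) (F i y)%:E)%E.

Lemma fine_esum_lsc_at : (\forall y \near x, esumF y < +oo)%E ->
  lsc_at (fun y => fine (esumF y)) x.
Proof.
move=> esum_fin a.
have esumE y : (esumF y < +oo)%E -> esumF y = (fine (esumF y))%:E.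
  by move=> fin; rewrite fineK // ge0_fin_numE // esum_ge0 // => i _; rewrite lee_fin.
rewrite -lte_fin -esumE ?(nbhs_singleton esum_fin) //.
move=> /ereal_sup_gt[_ [A [finA _] <-]]; rewrite fsumEFin // lte_fin fsbig_finite //=.
set sA := finmap.enum_fset _ => lt_a_sumA.
have sumA_cont : {for x, continuous (fun y => \sum_(i <- sA) F i y)}.
  by apply: cvg_big => [|i _]; [exact: add_continuous | exact: F_cont].
have sumA_gt := continuous_lsc_at sumA_cont lt_a_sumA.
near=> y; have lt_a_sumAy : a < \sum_(i <- sA) F i y by near: y.
apply: (lt_le_trans lt_a_sumAy); rewrite -lee_fin -esumE; last by near: y.
by rewrite -fsbig_finite // -fsumEFin //; apply: ereal_sup_ubound; exists A.
Unshelve. all: by end_near.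
Qed.

End FineEsumLsc.

Lemma convex_comb_reflect {R : numFieldType} {V : lmodType R} (x y : V) (t : R) : 0 < t ->
  x = (1 + t)^-1 *: y + (1 - (1 + t)^-1) *: (x + t^-1 *: (x - y)).
Proof.
move=> t_gt0; have t1_neq0 : 1 + t != 0 by rewrite gt_eqF // ltr_wpDl.
apply: (@scalerI _ _ (1 + t)) => //.
rewrite scalerDr !scalerA mulfV // scale1r.
rewrite (_ : (1 + t) * (1 - (1 + t)^-1) = t); last by field.
rewrite scalerDr scalerA mulfV ?gt_eqF // scale1r.
by rewrite scalerDl scale1r [RHS]addrCA [y + _]addrC subrK addrC.
Qed.


Section ConvexPlane.
Context {R : realType}.
Implicit Types (U : set (R * R)) (f : R * R -> R) (x z : R * R).

Lemma convex_on_le_max U f x z (t : R) :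
  convex_on U f -> U x -> U z -> 0 <= t <= 1 ->
  f (t *: x + (1 - t) *: z) <= Num.max (f x) (f z).
Proof.
move=> fconv Ux Uz /[dup] t01 /andP[t_ge0 t_le1].
apply: le_trans (fconv _ _ _ Ux Uz t01) _.
have fx_le : f x <= Num.max (f x) (f z) by rewrite le_max lexx.
have fz_le : f z <= Num.max (f x) (f z) by rewrite le_max lexx orbT.
nra.
Qed.

Lemma segment_convex_comb (a b u : R) : a < b -> a <= u <= b ->
  exists2 t, 0 <= t <= 1 & u = t * a + (1 - t) * b.
Proof.
move=> ab /andP[au ub]; exists ((b - u) / (b - a)); last by field; rewrite subr_eq0 gt_eqF.
by apply/andP; split; [apply: divr_ge0 | rewrite ler_pdivrMr]; lra.
Qed.

Lemma convex_on_bounded_square U f p (r : R) : convex_on U f -> 0 < r ->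
  (forall z, `|z - p| <= r -> U z) -> exists M, forall z, `|z - p| <= r -> f z <= M.
Proof.
move=> fconv r_gt0 sqU.
have inU u v : p.1 - r <= u <= p.1 + r -> p.2 - r <= v <= p.2 + r -> U (u, v).
  move=> /andP[? ?] /andP[? ?]; apply: sqU.
  by rewrite prod_normE ge_max /= !ler_norml; apply/andP; split; apply/andP; split; lra.
pose edge v := Num.max (f (p.1 - r, v)) (f (p.1 + r, v)).
exists (Num.max (edge (p.2 - r)) (edge (p.2 + r))) => -[u v].
rewrite prod_normE ge_max /= !ler_norml => /andP[/andP[u_ge u_le] /andP[v_ge v_le]].
have [t t01 u_eq] : exists2 t, 0 <= t <= 1 & u = t * (p.1 - r) + (1 - t) * (p.1 + r).
  by apply: segment_convex_comb; lra.
have u_edge w : p.2 - r <= w <= p.2 + r -> f (u, w) <= edge w.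
  move=> w_in; have r_ge0 : 0 <= r by exact: ltW.
  have := convex_on_le_max fconv (inU (p.1 - r) w _ w_in) (inU (p.1 + r) w _ w_in) t01.
  rewrite (_ : _ + _ = (u, w)); last first.
    by congr pair => /=; [rewrite u_eq | rewrite -scalerDl subrKC scale1r].
  by apply; apply/andP; split; lra.
have [l l01 v_eq] : exists2 l, 0 <= l <= 1 & v = l * (p.2 - r) + (1 - l) * (p.2 + r).
  by apply: segment_convex_comb; lra.
have := convex_on_le_max fconv (inU u (p.2 - r) _ _) (inU u (p.2 + r) _ _) l01.
rewrite (_ : _ + _ = (u, v)); last first.
  by congr pair => /=; [rewrite -scalerDl subrKC scale1r | rewrite v_eq].
move=> /(_ _ _ _ _) le_edges.
apply: le_trans (le_edges _ _ _ _) _; try (apply/andP; split; lra).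
by apply: le_max2; apply: u_edge; apply/andP; split; lra.
Qed.

Lemma convex_on_lsc_at U f x (r : R) :
  convex_on U f -> 0 < r -> (forall z, `|z - x| <= r -> U z) -> lsc_at f x.
Proof.
move=> fconv r_gt0 sqU a a_lt.
have [M fM] := convex_on_bounded_square fconv r_gt0 sqU.
have fx_le : f x <= M by apply: fM; rewrite subrr normr0 ltW.
pose t := (f x - a) / (M - f x + 1).
have t_gt0 : 0 < t by apply: divr_gt0; lra.
have tM : t * (M - f x) < f x - a.
  have : t * (M - f x + 1) = f x - a by rewrite /t mulfVK // gt_eqF //; lra.
  nra.
have near_x e : 0 < e -> \forall y \near x, `|x - y| < e.
  by move=> e_gt0; have := near_ball x e e_gt0; rewrite -ball_normE.
(* [x] divides the segment from [y] to its reflection [w], which stays in the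
   square, in the ratio [t : 1]; convexity gives [(1 + t) f x <= f y + t M]. *)
near=> y; pose w := x + t^-1 *: (x - y).
have xy_r : `|y - x| <= r by rewrite distrC ltW //; near: y; exact: near_x.
have wx_r : `|w - x| <= r.
  rewrite /w addrC addKr normrZ gtr0_norm ?invr_gt0 // ler_pdivrMl //.
  by apply: ltW; near: y; apply: near_x; exact: mulr_gt0.
pose l := (1 + t)^-1.
have l01 : 0 <= l <= 1 by rewrite invr_ge0 invf_le1 ?ler_wpDr ?ltr_wpDr; lra.
have := fconv _ _ _ (sqU _ xy_r) (sqU _ wx_r) l01.
rewrite -convex_comb_reflect // => fx_conv.
have fw := fM _ wx_r.
have tl : (1 + t) * l = 1 by rewrite mulfV // gt_eqF //; lra.
nra.
Unshelve. all: by end_near.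
Qed.

End ConvexPlane.

Section OpenRectangle.
Context {R : realType}.
Variables (s0 s1 a0 a1 : R).
Local Notation W := (Wint s0 s1 a0 a1).

Lemma Wint_gt0 x : 0 < s0 -> 0 < a0 -> W x -> 0 < x.1 /\ 0 < x.2.
Proof.
move=> s0_gt0 a0_gt0 [/andP[x1_gt _] /andP[x2_gt _]].
by split; [exact: lt_trans x1_gt | exact: lt_trans x2_gt].
Qed.

Lemma Wint_square x : W x -> exists2 r, 0 < r & forall z, `|z - x| <= r -> W z.
Proof.
case: x => p q [/= /andP[p_gt p_lt] /andP[q_gt q_lt]].
pose r := Num.min (Num.min (p - s0) (s1 - p)) (Num.min (q - a0) (a1 - q)) / 2.
have r_gt0 : 0 < r by rewrite divr_gt0 // !lt_min !subr_gt0 p_gt p_lt q_gt q_lt.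
have r_le : [/\ 2 * r <= p - s0, 2 * r <= s1 - p, 2 * r <= q - a0 & 2 * r <= a1 - q].
  by rewrite /r mulrC divfK // !ge_min !lexx !orbT.
exists r => // -[u v]; rewrite prod_normE ge_max /= !ler_norml.
move=> /andP[/andP[? ?] /andP[? ?]]; case: r_le => *.
by split; apply/andP; split => /=; lra.
Qed.

Lemma Wint_convex_lsc_at (f : R * R -> R) x : convex_on W f -> W x -> lsc_at f x.
Proof. by move=> fconv /Wint_square[r r_gt0]; exact: convex_on_lsc_at fconv r_gt0. Qed.

Lemma blowup_at_boundary_le (f g : R * R -> R) : (forall x, W x -> f x <= g x) ->
  blowup_at_boundary s0 s1 a0 a1 f -> blowup_at_boundary s0 s1 a0 a1 g.
Proof.
move=> fg fblow M; have [e e_gt0 fM] := fblow M.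
by exists e => // x Wx near_bd; apply: le_trans (fM _ Wx near_bd) (fg _ Wx).
Qed.

Lemma Wint_lsc_min (f : R * R -> R) : s0 < s1 -> a0 < a1 ->
  (forall x, W x -> lsc_at f x) -> blowup_at_boundary s0 s1 a0 a1 f ->
  exists2 xbar, W xbar & forall x, W x -> f xbar <= f x.
Proof.
move=> s01 a01 flsc fblow.
pose xc := ((s0 + s1) / 2, (a0 + a1) / 2).
have [e e_gt0 f_ge] := fblow (f xc).
pose m := Num.min e (Num.min ((s1 - s0) / 4) ((a1 - a0) / 4)).
have m_gt0 : 0 < m by rewrite !lt_min e_gt0 !divr_gt0 ?subr_gt0.
have [m_e m_s m_a] : [/\ m <= e, m <= (s1 - s0) / 4 & m <= (a1 - a0) / 4].
  by rewrite !ge_min !lexx !orbT.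
pose K := `[s0 + m, s1 - m] `*` `[a0 + m, a1 - m].
have KW x : K x -> W x.
  case: x => u v; rewrite /K /= !in_itv /= => -[/andP[? ?] /andP[? ?]].
  by split; apply/andP; split => /=; lra.
have Kxc : K xc by rewrite /K /= !in_itv /=; split; apply/andP; split; lra.
have cK : compact K by apply: compact_setX; exact: segment_compact.
have [xbar Kxbar xbar_min] :=
  compact_lsc_min cK (ex_intro _ xc Kxc) (fun x Kx => flsc x (KW x Kx)).
exists xbar => [|x Wx]; first exact: KW.
have [Kx|notKx] := pselect (K x); first exact: xbar_min.
apply: le_trans (xbar_min _ Kxc) (f_ge _ Wx _).
move: Wx notKx; case: x => u v; rewrite /K /= !in_itv /= => -[/andP[? ?] /andP[? ?]] notKx.
have [?|?] := ltP u (s0 + m); first by left; lra.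
have [?|?] := ltP (s1 - m) u; first by right; left; lra.
have [?|?] := ltP v (a0 + m); first by right; right; left; lra.
have [?|?] := ltP (a1 - m) v; first by right; right; right; lra.
by exfalso; apply: notKx; split; apply/andP; split.
Qed.

End OpenRectangle.

Lemma esumZl_le {R : realType} {T : choiceType} (c : R) (f : T -> R) :
  0 <= c -> (forall k, 0 <= f k) ->
  (\esum_(k in [set: T]) (c * f k)%:E <= c%:E * \esum_(k in [set: T]) (f k)%:E)%E.
Proof.
move=> c_ge0 f_ge0; apply: ge_ereal_sup => _ [A [finA _] <-].
rewrite fsumEFin // fsbig_finite //= -mulr_sumr EFinM lee_wpmul2l ?lee_fin //.
by rewrite -fsbig_finite // -fsumEFin //; apply: ereal_sup_ubound; exists A.
Qed.

Lemma esumZl_lt_pinfty {R : realType} {T : choiceType} (c : R) (f : T -> R) :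
  0 <= c -> (forall k, 0 <= f k) -> (\esum_(k in [set: T]) (f k)%:E < +oo)%E ->
  (\esum_(k in [set: T]) (c * f k)%:E < +oo)%E.
Proof.
move=> c_ge0 f_ge0 f_fin.
by rewrite (le_lt_trans (esumZl_le c_ge0 f_ge0)) ?lte_mul_pinfty.
Qed.

Section FourierCoefficients.
Context {R : realType} {d : nat}.
Implicit Types (g u : freq d -> R[i]) (k : freq d) (s a : R).

Definition ssol_coef k s a : R := a / (a + kpow k s).

Lemma sqmod_ge0 (z : R[i]) : 0 <= sqmod z.
Proof. by rewrite /sqmod; nra. Qed.

Lemma sqmodB_le (z w : R[i]) : sqmod (z - w) <= 2 * sqmod z + 2 * sqmod w.
Proof.
case: z w => [x y] [x' y']; rewrite /sqmod /=.
by have := sqr_ge0 (x + x'); have := sqr_ge0 (y + y'); nra.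
Qed.

Lemma kpow_ge0 k s : 0 <= kpow k s.
Proof. by rewrite /kpow; case: ifP => // _; exact: powR_ge0. Qed.

Lemma kpowM2 k s : kpow k (2 * s) = kpow k s ^+ 2.
Proof.
rewrite /kpow; case: ifP => _; first by rewrite expr0n.
by rewrite mulrC powRrM powR_mulrn // powR_ge0.
Qed.

Lemma ssol_coef_ge0 k s a : 0 < a -> 0 <= ssol_coef k s a.
Proof. by move=> a_gt0; rewrite divr_ge0 ?addr_ge0 ?kpow_ge0 // ltW. Qed.

Lemma ssol_coef_le1 k s a : 0 < a -> ssol_coef k s a <= 1.
Proof. by move=> a_gt0; rewrite ler_pdivrMr ?mul1r ?lerDl ?kpow_ge0 ?ltr_wpDr ?kpow_ge0. Qed.

Lemma kpow_ssol_coef_le k s a : 0 < a -> kpow k s * ssol_coef k s a <= a.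
Proof.
move=> a_gt0; have := kpow_ge0 k s => kpow_ge0.
by rewrite /ssol_coef mulrA ler_pdivrMr; nra.
Qed.

Lemma sqmod_Ssol g s a k : sqmod (Ssol g s a k) = ssol_coef k s a ^+ 2 * sqmod (g k).
Proof. by rewrite /sqmod /Ssol /ssol_coef; case: (g k) => x y /=; ring. Qed.

Lemma sqmod_Ssol_sub g u s a k :
  sqmod (Ssol g s a k - u k) =
  (ssol_coef k s a * complex.Re (g k) - complex.Re (u k)) ^+ 2 +
  (ssol_coef k s a * complex.Im (g k) - complex.Im (u k)) ^+ 2.
Proof. by rewrite /sqmod /Ssol /ssol_coef; case: (g k) (u k) => x y [x' y'] /=; ring. Qed.

Lemma sqmod_Ssol_le g s a k : 0 < a -> sqmod (Ssol g s a k) <= sqmod (g k).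
Proof.
move=> a_gt0.
by rewrite sqmod_Ssol ler_piMl ?sqmod_ge0 // expr_le1 ?ssol_coef_ge0 ?ssol_coef_le1.
Qed.

Lemma is_L2_Ssol g s a : 0 < a -> is_L2 g -> is_L2 (Ssol g s a).
Proof.
move=> a_gt0; apply: le_lt_trans; apply: le_esum => k _.
by rewrite lee_fin sqmod_Ssol_le.
Qed.

Lemma is_L2_sub g u : is_L2 g -> is_L2 u -> is_L2 (fun k => g k - u k).
Proof.
have sqmod2_ge0 (c : freq d -> R[i]) k : (0 <= (2 * sqmod (c k))%:E)%E.
  by rewrite lee_fin mulr_ge0 ?sqmod_ge0.
move=> g_L2 u_L2; rewrite /is_L2 /l2norm2.
pose b k := ((2 * sqmod (g k))%:E + (2 * sqmod (u k))%:E)%E.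
apply: (le_lt_trans (le_esum (b := b) _)).
  by move=> k _; rewrite /b -EFinD lee_fin sqmodB_le.
rewrite esumD; [|by move=> k _; exact: sqmod2_ge0..].
by apply: lte_add_pinfty; apply: esumZl_lt_pinfty => // k; exact: sqmod_ge0.
Qed.

Lemma is_H0_Ssol g s a : 0 < a -> is_L2_0 g -> is_H0 (2 * s) (Ssol g s a).
Proof.
move=> a_gt0 [g_L2 g0]; split; first split.
- exact: is_L2_Ssol.
- by rewrite /Ssol g0 mulr0.
apply: le_lt_trans (esumZl_lt_pinfty (sqr_ge0 a) (fun k => sqmod_ge0 (g k)) g_L2).
apply: le_esum => k _; rewrite lee_fin sqmod_Ssol mulrA kpowM2 -exprMn.
rewrite ler_wpM2r ?sqmod_ge0 //.
rewrite ler_sqr ?nnegrE ?kpow_ssol_coef_le ?(ltW a_gt0) //.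
exact: mulr_ge0 (kpow_ge0 _ _) (ssol_coef_ge0 _ _ a_gt0).
Qed.

End FourierCoefficients.

Section ParameterContinuity.
Context {R : realType} {d : nat}.
Implicit Types (g u : freq d -> R[i]) (k : freq d).

Lemma kpow_continuous k (s : R) : 0 < s -> {for s, continuous (kpow k)}.
Proof.
move=> s_gt0; rewrite /kpow; case: (k == 0); first exact: cvg_cst.
rewrite /powR; case: (knorm2 R k == 0).
  apply: cvg_near_cst; near=> t.
  have t_gt0 : 0 < t by near: t; exact: lt_nbhsr.
  by rewrite !gt_eqF.
apply: continuous_comp; last exact: continuous_expR.
by apply: cvgMr_tmp; exact: cvg_id.
Unshelve. all: by end_near.
Qed.

Lemma ssol_coef_continuous k (x : R * R) : 0 < x.1 -> 0 < x.2 ->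
  {for x, continuous (fun y => ssol_coef k y.1 y.2)}.
Proof.
move=> x1_gt0 x2_gt0; have kpow_cvg : kpow k y.1 @[y --> x] --> kpow k x.1.
  have fst_cvg : (fun y : R * R => y.1) @ x --> x.1 by exact: cvg_fst.
  by have := continuous_cvg _ (kpow_continuous (k := k) x1_gt0) fst_cvg; exact.
apply: cvgM; first exact: cvg_snd.
apply: cvgV; last exact: cvgD cvg_snd kpow_cvg.
by rewrite gt_eqF // ltr_pwDl // kpow_ge0.
Qed.

Lemma sqmod_Ssol_sub_continuous g u k (x : R * R) : 0 < x.1 -> 0 < x.2 ->
  {for x, continuous (fun y => sqmod (Ssol g y.1 y.2 k - u k))}.
Proof.
move=> x1_gt0 x2_gt0; have c_cont := ssol_coef_continuous (k := k) x1_gt0 x2_gt0.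
pose re y := ssol_coef k y.1 y.2 * complex.Re (g k) - complex.Re (u k).
pose im y := ssol_coef k y.1 y.2 * complex.Im (g k) - complex.Im (u k).
rewrite (_ : (fun y => _) = fun y => re y * re y + im y * im y); last first.
  by apply: funext => y; rewrite sqmod_Ssol_sub !expr2.
by apply: cvgD; apply: cvgM; apply: cvgB; (try exact: cvg_cst); exact: cvgMr_tmp.
Qed.

End ParameterContinuity.

Section Misfit.
Context {R : realType} {d : nat}.
Variables (g u : freq d -> R[i]).
Hypotheses (g_L2 : is_L2 g) (u_L2 : is_L2 u).

Definition misfit (y : R * R) : \bar R := l2norm2 (fun k => Ssol g y.1 y.2 k - u k).

Lemma misfit_lt_pinfty (y : R * R) : 0 < y.2 -> (misfit y < +oo)%E.
Proof. by move=> y2_gt0; apply: is_L2_sub => //; exact: is_L2_Ssol. Qed.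

Lemma misfit_fineK (y : R * R) : 0 < y.2 -> misfit y = (fine (misfit y))%:E.
Proof.
move=> y2_gt0; rewrite fineK // ge0_fin_numE ?misfit_lt_pinfty //.
by apply: esum_ge0 => k _; rewrite lee_fin sqmod_ge0.
Qed.

Lemma fine_misfit_lsc_at (x : R * R) : 0 < x.1 -> 0 < x.2 ->
  lsc_at (fun y => fine (misfit y)) x.
Proof.
move=> x1_gt0 x2_gt0; apply: fine_esum_lsc_at => [k y|k|].
- exact: sqmod_ge0.
- exact: sqmod_Ssol_sub_continuous.
have snd_lsc : lsc_at (fun y : R * R => y.2) x by apply: continuous_lsc_at; exact: cvg_snd.
by apply: filterS (snd_lsc _ x2_gt0) => y; exact: misfit_lt_pinfty.
Qed.

End Misfit.

Theorem theorem3 (R : realType) (d : nat) (hd : (0 < d)%N)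
  (s0 s1 a0 a1 : R) (hs0 : 0 < s0) (hs01 : s0 < s1) (ha0 : 0 < a0) (ha01 : a0 < a1)
  (g ud : freq d -> R[i]) (hg : is_L2_0 g) (hud : is_L2 ud)
  (phi : R * R -> R)
  (hphiC2 : C2_on (Wint s0 s1 a0 a1) phi)
  (hphi0 : forall x, Wint s0 s1 a0 a1 x -> 0 <= phi x)
  (hphiconv : convex_on (Wint s0 s1 a0 a1) phi)
  (hphiinf : blowup_at_boundary s0 s1 a0 a1 phi) :
  exists2 xbar : R * R, Wint s0 s1 a0 a1 xbar &
    (forall x, Wint s0 s1 a0 a1 x -> (jfun g ud phi xbar <= jfun g ud phi x)%E) /\
    is_H0 (2 * xbar.1) (Ssol g xbar.1 xbar.2).
Proof.
have [g_L2 _] := hg.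
have W_gt0 x := @Wint_gt0 _ s0 s1 a0 a1 x hs0 ha0.
pose c : R := (2 * (2 * pi) ^+ d)^-1.
have c_gt0 : 0 < c by rewrite invr_gt0 mulr_gt0 // exprn_gt0 // mulr_gt0 // pi_gt0.
pose J y := c * fine (misfit g ud y) + phi y.
have jfunE x : Wint s0 s1 a0 a1 x -> jfun g ud phi x = (J x)%:E.
  move=> /W_gt0[_ x2_gt0].
  by rewrite /jfun -/(misfit g ud x) (misfit_fineK g_L2 hud x2_gt0).
have phi_le_J x : Wint s0 s1 a0 a1 x -> phi x <= J x.
  move=> _; rewrite lerDr mulr_ge0 ?fine_ge0 ?(ltW c_gt0) //.
  by apply: esum_ge0 => k _; rewrite lee_fin sqmod_ge0.
have J_lsc x : Wint s0 s1 a0 a1 x -> lsc_at J x.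
  move=> /[dup] Wx /W_gt0[x1_gt0 x2_gt0]; apply: lsc_atD (Wint_convex_lsc_at hphiconv Wx).
  exact: lsc_atZl c_gt0 (fine_misfit_lsc_at g_L2 hud x1_gt0 x2_gt0).
have [xbar Wxbar xbar_min] :=
  Wint_lsc_min hs01 ha01 J_lsc (blowup_at_boundary_le phi_le_J hphiinf).
exists xbar => //; split => [x Wx|]; first by rewrite !jfunE // lee_fin xbar_min.
by apply: is_H0_Ssol => //; case: (W_gt0 _ Wxbar).
Qed.
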